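(* Let $M$ be an $n$-counter Minsky machine and $k_1,\dots,k_n$ non-negative integers. If the sequent $$l_1\otimes r_1^{k_1}\otimes\cdots\otimes r_n^{k_n},\ !\Phi_M,\ !\mathcal{K}\ \vdash\ l_0$$ is derivable in (propositional) linear logic, then $M$ can go from the initial configuration $(L_1,k_1,\dots,k_n)$ to the halting configuration $(L_0,0,\dots,0)$.
   Context: An $n$-counter Minsky machine $M$ has counters $x_1,\dots,x_n$ with non-negative integer values and a finite list of instructions labelled by labels $L_0,L_1,\dots$, each of one of the forms: (1) $L_i: x_m:=x_m+1$; goto $L_j$; (2) $L_i: x_m:=x_m-1$; goto $L_j$; (3) $L_i$: if $x_m>0$ then goto $L_j$; (4) $L_i$: if $x_m=0$ then goto $L_j$; (5) $L_0$: halt; where $i\ge1$. A configuration is $(L,c_1,\dots,c_n)$; a computation is a finite sequence of configurations each obtained from the previous by applying an instruction of $M$ (an instruction at $L_i$ applies only in a configuration with label $L_i$; type (2) requires $x_m\ge1$, type (3) requires $x_m>0$, type (4) requires $x_m=0$). Encoding: distinct propositional literals $r_1,\dots,r_n$, $l_0,l_1,\dots$ (one per label), $\kappa_1,\dots,\kappa_n$; $r^k$ is the tensor of $k$ copies of $r$ (omitted when $k=0$). For an instruction $I$ of type (1)–(4): $\varphi_{(1)}=l_i\multimap(l_j\otimes r_m)$, $\varphi_{(2)}=(l_i\otimes r_m)\multimap l_j$, $\varphi_{(3)}=(l_i\otimes r_m)\multimap(l_j\otimes r_m)$, $\varphi_{(4)}=l_i\multimap(l_j\oplus\kappa_m)$.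 $\Phi_M$ is the multiset of $\varphi_I$ over the instructions of $M$ of types (1)–(4). $\mathcal{K}=\bigcup_{m=1}^n\mathcal{K}_m$, where $\mathcal{K}_m$ consists of $\kappa_m\multimap l_0$ and $(\kappa_m\otimes r_i)\multimap\kappa_m$ for every $i\ne m$. $!\Phi$ denotes $\{!A: A\in\Phi\}$. *)

From Stdlib Require Import List Permutation Relations.
Import ListNotations.

Inductive atom : Type :=
| At_r (m : nat)
| At_l (j : nat)
| At_kappa (m : nat).

Inductive formula : Type :=
| Pos (a : atom)
| Neg (a : atom)
| One | Bot | Top | Zero
| Tensor (A B : formula)
| Par (A B : formula)
| With (A B : formula)
| Plus (A B : formula)
| OfCourse (A : formula)
| WhyNot (A : formula).

Fixpoint dual (A : formula) : formula :=
  match A with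
  | Pos a => Neg a
  | Neg a => Pos a
  | One => Bot
  | Bot => One
  | Top => Zero
  | Zero => Top
  | Tensor A B => Par (dual A) (dual B)
  | Par A B => Tensor (dual A) (dual B)
  | With A B => Plus (dual A) (dual B)
  | Plus A B => With (dual A) (dual B)
  | OfCourse A => WhyNot (dual A)
  | WhyNot A => OfCourse (dual A)
  end.

Definition lolli (A B : formula) : formula := Par (dual A) B.

Inductive ll : list formula -> Prop :=
| ll_ax : forall a, ll [Pos a; Neg a]
| ll_ex : forall G D, Permutation G D -> ll G -> ll D
| ll_cut : forall A G D, ll (A :: G) -> ll (dual A :: D) -> ll (G ++ D)
| ll_one : ll [One]
| ll_bot : forall G, ll G -> ll (Bot :: G)
| ll_top : forall G, ll (Top :: G)
| ll_tensor : forall A B G D, ll (A :: G) -> ll (B :: D) -> ll (Tensor A B :: G ++ D)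
| ll_par : forall A B G, ll (A :: B :: G) -> ll (Par A B :: G)
| ll_with : forall A B G, ll (A :: G) -> ll (B :: G) -> ll (With A B :: G)
| ll_plus1 : forall A B G, ll (A :: G) -> ll (Plus A B :: G)
| ll_plus2 : forall A B G, ll (B :: G) -> ll (Plus A B :: G)
| ll_oc : forall A G, ll (A :: map WhyNot G) -> ll (OfCourse A :: map WhyNot G)
| ll_de : forall A G, ll (A :: G) -> ll (WhyNot A :: G)
| ll_wk : forall A G, ll G -> ll (WhyNot A :: G)
| ll_co : forall A G, ll (WhyNot A :: WhyNot A :: G) -> ll (WhyNot A :: G).

Definition ll_sequent (Gamma Delta : list formula) : Prop :=
  ll (map dual Gamma ++ Delta).

Inductive instr : Type :=
| I_inc (i m j : nat)
| I_dec (i m j : nat)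
| I_jpos (i m j : nat)
| I_jzero (i m j : nat).
(* (5) "L_0: halt" is implicit: no instruction has label L_0. *)

Definition instr_wf (n : nat) (I : instr) : Prop :=
  match I with
  | I_inc i m _ | I_dec i m _ | I_jpos i m _ | I_jzero i m _ =>
      1 <= i /\ 1 <= m <= n
  end.

Definition machine_wf (n : nat) (M : list instr) : Prop :=
  Forall (instr_wf n) M.

(* configurations (L_i, c_1, ..., c_n): label index and list of counter
   values; counter x_m is the (m-1)-th entry. *)
Definition config : Type := (nat * list nat)%type.

Definition ctr (cs : list nat) (m : nat) : nat := nth (m - 1) cs 0.

Fixpoint upd (cs : list nat) (p : nat) (f : nat -> nat) : list nat :=
  match cs, p with
  | [], _ => []
  | c :: cs', 0 => f c :: cs'
  | c :: cs', S p' => c :: upd cs' p' f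
  end.

Inductive step (M : list instr) : config -> config -> Prop :=
| st_inc : forall i m j cs, In (I_inc i m j) M ->
    step M (i, cs) (j, upd cs (m - 1) S)
| st_dec : forall i m j cs, In (I_dec i m j) M -> 1 <= ctr cs m ->
    step M (i, cs) (j, upd cs (m - 1) pred)
| st_jpos : forall i m j cs, In (I_jpos i m j) M -> 0 < ctr cs m ->
    step M (i, cs) (j, cs)
| st_jzero : forall i m j cs, In (I_jzero i m j) M -> ctr cs m = 0 ->
    step M (i, cs) (j, cs).

Definition computes (M : list instr) (c c' : config) : Prop :=
  clos_refl_trans config (step M) c c'.

Definition r (m : nat) : formula := Pos (At_r m).
Definition l (j : nat) : formula := Pos (At_l j).
Definition kappa (m : nat) : formula := Pos (At_kappa m).

Definition phi (I : instr) : formula :=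
  match I with
  | I_inc i m j => lolli (l i) (Tensor (l j) (r m))
  | I_dec i m j => lolli (Tensor (l i) (r m)) (l j)
  | I_jpos i m j => lolli (Tensor (l i) (r m)) (Tensor (l j) (r m))
  | I_jzero i m j => lolli (l i) (Plus (l j) (kappa m))
  end.

Definition Phi (M : list instr) : list formula := map phi M.

Definition K_m (n m : nat) : list formula :=
  lolli (kappa m) (l 0) ::
  map (fun i => lolli (Tensor (kappa m) (r i)) (kappa m))
      (filter (fun i => negb (Nat.eqb i m)) (seq 1 n)).

Definition K (n : nat) : list formula :=
  flat_map (K_m n) (seq 1 n).

Definition initial_formula (ks : list nat) : formula :=
  fold_left Tensor
    (flat_map (fun mk => repeat (r (fst mk)) (snd mk))
              (combine (seq 1 (length ks)) ks))
    (l 1).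

(* Phase semantics.  Take as phase space the free commutative monoid on the
   atoms (words up to permutation) and as pole the set of words [h :: w] in
   which [w] consists of counter atoms [r_m] and either [h = l_i] and the
   machine halts from label [i] with counter values read off [w], or
   [h = kappa_m] and [w] contains no [r_m].  Every formula of [!Phi_M] and
   [!K] is valid in this model because the pole is closed backwards under
   the corresponding machine step, so by soundness the word
   [l_1 r_1^k_1 ... r_n^k_n] lies in the pole. *)
From Stdlib Require Import List Permutation Relations Lia PeanoNat
  FunctionalExtensionality PropExtensionality.
Import ListNotations.

Section PhaseSemantics.

Variable pole : list atom -> Prop.
Hypothesis pole_perm : forall u v, Permutation u v -> pole u -> pole v.

Definition orth (X : list atom -> Prop) : list atom -> Prop :=
  fun y => forall x, X x -> pole (x ++ y).

Definition prd (X Y : list atom -> Prop) : list atom -> Prop :=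
  fun z => exists x y, X x /\ Y y /\ z = x ++ y.

Definition unit_when (P : Prop) : list atom -> Prop := fun z => z = [] /\ P.

Fixpoint interp (A : formula) : list atom -> Prop :=
  match A with
  | Pos a => orth (orth (fun x => x = [a]))
  | Neg a => orth (fun x => x = [a])
  | One => orth (orth (fun x => x = []))
  | Bot => orth (fun x => x = [])
  | Top => orth (fun _ => False)
  | Zero => orth (orth (fun _ => False))
  | Tensor A B => orth (orth (prd (interp A) (interp B)))
  | Par A B => orth (prd (orth (interp A)) (orth (interp B)))
  | With A B => orth (fun x => orth (interp A) x \/ orth (interp B) x)
  | Plus A B => orth (orth (fun x => interp A x \/ interp B x))
  | OfCourse A => orth (orth (fun x => x = [] /\ interp A x))
  | WhyNot A => orth (fun x => x = [] /\ orth (interp A) x)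
  end.

Lemma biorth_intro X x : X x -> orth (orth X) x.
Proof.
  intros Hx y Hy. apply (pole_perm (x ++ y)); [apply Permutation_app_comm|].
  exact (Hy x Hx).
Qed.

Lemma biorth_mono (X Y : list atom -> Prop) z :
  (forall x, X x -> Y x) -> orth (orth X) z -> orth (orth Y) z.
Proof. intros H Hz y Hy. apply Hz. intros x Hx. exact (Hy x (H x Hx)). Qed.

Lemma biorth_elim X x y :
  orth (orth X) x -> (forall s, X s -> pole (s ++ y)) -> pole (x ++ y).
Proof.
  intros Hx H. apply (pole_perm (y ++ x)); [apply Permutation_app_comm|].
  exact (Hx y H).
Qed.

Lemma orth_triple X : orth (orth (orth X)) = orth X.
Proof.
  apply functional_extensionality; intro y; apply propositional_extensionality.
  split.
  - intros H x Hx. exact (H x (biorth_intro X x Hx)).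
  - intros H z Hz. apply (pole_perm (y ++ z)); [apply Permutation_app_comm|].
    exact (Hz y H).
Qed.

Lemma interp_biorth A : orth (orth (interp A)) = interp A.
Proof. destruct A; apply orth_triple. Qed.

Lemma interp_dual A : interp (dual A) = orth (interp A).
Proof.
  induction A; simpl; rewrite ?IHA, ?IHA1, ?IHA2, ?interp_biorth, ?orth_triple;
    reflexivity.
Qed.

Lemma interp_orth_elim A x y : interp A x -> orth (interp A) y -> pole (y ++ x).
Proof. intros Hx Hy. rewrite <- interp_biorth in Hx. exact (Hx y Hy). Qed.

Fixpoint ctx (G : list formula) : list atom -> Prop :=
  match G with
  | [] => fun c => c = []
  | A :: G => prd (orth (interp A)) (ctx G)
  end.

Definition valid (G : list formula) : Prop := forall c, ctx G c -> pole c.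

Lemma valid_cons A G : valid (A :: G) <-> forall g, ctx G g -> interp A g.
Proof.
  split.
  - intros H g Hg. rewrite <- interp_biorth. intros z Hz. apply H.
    exists z, g. auto.
  - intros H c (x & g & Hx & Hg & ->).
    apply (pole_perm (g ++ x)); [apply Permutation_app_comm|].
    exact (Hx g (H g Hg)).
Qed.

Lemma ctx_app G D c :
  ctx (G ++ D) c -> exists g d, ctx G g /\ ctx D d /\ c = g ++ d.
Proof.
  revert c; induction G as [|A G IH]; intros c H; simpl in *.
  - exists [], c. auto.
  - destruct H as (x & y & Hx & Hy & ->).
    destruct (IH _ Hy) as (g & d & Hg & Hd & ->).
    exists (x ++ g), d. split; [exists x, g; auto|]. split; [exact Hd|].
    apply app_assoc.
Qed.

Lemma ctx_perm G D :
  Permutation G D -> forall c, ctx D c -> exists c', ctx G c' /\ Permutation c' c.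
Proof.
  induction 1 as [|A G D _ IH|A B G|G D E _ IH1 _ IH2]; intros c Hc; simpl in *.
  - exists c. auto.
  - destruct Hc as (a & c0 & Ha & H0 & ->).
    destruct (IH _ H0) as (c1 & H1 & P).
    exists (a ++ c1). split; [exists a, c1; auto|].
    apply Permutation_app_head, P.
  - destruct Hc as (a & c0 & Ha & (b & c1 & Hb & H1 & ->) & ->).
    exists (b ++ a ++ c1). split; [|apply Permutation_app_swap_app].
    exists b, (a ++ c1). repeat split; auto. exists a, c1. auto.
  - destruct (IH2 _ Hc) as (c1 & H1 & P1).
    destruct (IH1 _ H1) as (c2 & H2 & P2).
    exists c2. split; [exact H2|]. eapply perm_trans; eauto.
Qed.

Lemma unit_when_app P Q x y :
  orth (orth (unit_when P)) x -> orth (orth (unit_when Q)) y ->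
  orth (orth (unit_when (P /\ Q))) (x ++ y).
Proof.
  intros Hx Hy z Hz. rewrite app_assoc. apply Hy. intros w [-> HQ].
  apply Hx. intros w' [-> HP]. apply (Hz []). split; auto.
Qed.

(* The elements of a context of why-not formulas behave like the unit:
   this is what makes promotion sound. *)
Lemma ctx_whynot_unit G c :
  ctx (map WhyNot G) c -> orth (orth (unit_when (ctx (map WhyNot G) []))) c.
Proof.
  revert c; induction G as [|B G IH]; intros c Hc; simpl in *.
  - subst c. apply biorth_intro. split; reflexivity.
  - destruct Hc as (x & c0 & Hx & H0 & ->).
    assert (Hx' : orth (orth (unit_when (orth (interp B) []))) x).
    { revert Hx. apply biorth_mono. intros u [-> Hu]. split; auto. }
    generalize (unit_when_app _ _ _ _ Hx' (IH _ H0)). apply biorth_mono.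
    intros u [-> [H1 H2]]. split; [reflexivity|].
    exists [], []. repeat split; auto. apply biorth_intro. split; auto.
Qed.

Theorem ll_sound G : ll G -> valid G.
Proof.
  induction 1 as [a|G D P _ IH|A G D _ IH1 _ IH2| |G _ IH|G
    |A B G D _ IH1 _ IH2|A B G _ IH|A B G _ IH1 _ IH2|A B G _ IH|A B G _ IH
    |A G _ IH|A G _ IH|A G _ IH|A G _ IH].
  - apply valid_cons. intros g (x & g0 & Hx & -> & ->).
    rewrite app_nil_r. exact Hx.
  - intros c Hc. destruct (ctx_perm _ _ P c Hc) as (c' & H1 & P1).
    exact (pole_perm _ _ P1 (IH _ H1)).
  - intros c Hc. destruct (ctx_app _ _ _ Hc) as (g & d & Hg & Hd & ->).
    rewrite valid_cons in IH1, IH2. specialize (IH2 _ Hd).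
    rewrite interp_dual in IH2. exact (IH2 g (IH1 g Hg)).
  - apply valid_cons. intros g ->. apply biorth_intro. reflexivity.
  - apply valid_cons. intros g Hg z ->. exact (IH g Hg).
  - apply valid_cons. intros g _ z [].
  - apply valid_cons. intros c Hc.
    destruct (ctx_app _ _ _ Hc) as (g & d & Hg & Hd & ->).
    rewrite valid_cons in IH1, IH2. apply biorth_intro.
    exists g, d. split; [apply IH1|split; [apply IH2|reflexivity]]; assumption.
  - apply valid_cons. intros g Hg z (x & y & Hx & Hy & ->).
    rewrite <- app_assoc. apply IH. exists x, (y ++ g).
    repeat split; auto. exists y, g. auto.
  - rewrite valid_cons in IH1, IH2. apply valid_cons. intros g Hg z [Hz|Hz].
    + exact (interp_orth_elim A g z (IH1 g Hg) Hz).
    + exact (interp_orth_elim B g z (IH2 g Hg) Hz).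
  - rewrite valid_cons in IH. apply valid_cons. intros g Hg.
    apply biorth_intro. left. exact (IH g Hg).
  - rewrite valid_cons in IH. apply valid_cons. intros g Hg.
    apply biorth_intro. right. exact (IH g Hg).
  - rewrite valid_cons in IH. apply valid_cons. intros g Hg.
    generalize (ctx_whynot_unit G g Hg). apply biorth_mono.
    intros u [-> Hu]. split; [reflexivity|]. exact (IH _ Hu).
  - rewrite valid_cons in IH. apply valid_cons. intros g Hg z [-> Hz].
    exact (interp_orth_elim A g [] (IH _ Hg) Hz).
  - apply valid_cons. intros g Hg z [-> Hz]. exact (IH g Hg).
  - apply valid_cons. intros g Hg z [-> Hz].
    assert (Hwn : orth (interp (WhyNot A)) []) by (apply biorth_intro; auto).
    apply (IH ([] ++ [] ++ g)). exists [], ([] ++ g).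
    repeat split; [exact Hwn|]. exists [], g. auto.
Qed.

Lemma ll_sequent_sound A G B x y :
  ll_sequent (A :: map OfCourse G) [B] ->
  interp A x -> (forall C, In C G -> interp C []) -> orth (interp B) y ->
  pole (x ++ y).
Proof.
  intros Hll Hx HG Hy. apply (ll_sound _ Hll). exists x, y. split.
  { rewrite interp_dual, interp_biorth. exact Hx. }
  split; [|reflexivity]. clear Hll.
  induction G as [|C G IH]; simpl.
  - exists y, []. rewrite app_nil_r. auto.
  - exists [], y. repeat split.
    + apply biorth_intro. split; [reflexivity|].
      rewrite interp_dual, interp_biorth. apply HG. left. reflexivity.
    + apply IH. intros C' HC'. apply HG. right. exact HC'.
Qed.

Lemma interp_atom_intro a : interp (Pos a) [a].
Proof. apply biorth_intro. reflexivity. Qed.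

Lemma interp_atom_elim a x y : interp (Pos a) x -> pole (a :: y) -> pole (x ++ y).
Proof. intros Hx Ha. apply (biorth_elim _ _ _ Hx). intros s ->. exact Ha. Qed.

Lemma orth_atom_iff a y : orth (interp (Pos a)) y <-> pole (a :: y).
Proof.
  split.
  - intros H. exact (H [a] (interp_atom_intro a)).
  - intros Ha x Hx. exact (interp_atom_elim a x y Hx Ha).
Qed.

Lemma interp_tensor_elim a b x y :
  interp (Tensor (Pos a) (Pos b)) x -> pole (a :: b :: y) -> pole (x ++ y).
Proof.
  intros Hx Hab. apply (biorth_elim _ _ _ Hx). intros s (u & v & Hu & Hv & ->).
  rewrite <- app_assoc. apply (interp_atom_elim a); [exact Hu|].
  apply (pole_perm (v ++ a :: y)); [apply Permutation_sym, Permutation_middle|].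
  apply (interp_atom_elim b); [exact Hv|].
  exact (pole_perm _ _ (perm_swap b a y) Hab).
Qed.

Lemma orth_tensor_elim a b y :
  orth (interp (Tensor (Pos a) (Pos b))) y -> pole (a :: b :: y).
Proof.
  intros H. apply (H [a; b]). apply biorth_intro.
  exists [a], [b]. repeat split; apply interp_atom_intro.
Qed.

Lemma orth_plus_elim a b y :
  orth (interp (Plus (Pos a) (Pos b))) y -> pole (a :: y) /\ pole (b :: y).
Proof.
  intros H. split.
  - apply (H [a]). apply biorth_intro. left. apply interp_atom_intro.
  - apply (H [b]). apply biorth_intro. right. apply interp_atom_intro.
Qed.

Lemma interp_lolli_nil A B :
  (forall x y, interp A x -> orth (interp B) y -> pole (x ++ y)) ->
  interp (lolli A B) [].
Proof.
  intros H. simpl. rewrite interp_dual, interp_biorth.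
  intros z (x & y & Hx & Hy & ->). rewrite app_nil_r. exact (H x y Hx Hy).
Qed.

Lemma interp_fold_tensor w A x :
  interp A x -> interp (fold_left Tensor (map Pos w) A) (x ++ w).
Proof.
  revert A x; induction w as [|a w IH]; intros A x Hx; simpl.
  - rewrite app_nil_r. exact Hx.
  - replace (x ++ a :: w) with ((x ++ [a]) ++ w) by (rewrite <- app_assoc; reflexivity).
    apply IH, biorth_intro. exists x, [a]. repeat split; auto.
    apply interp_atom_intro.
Qed.

End PhaseSemantics.

Definition atom_eq_dec (a b : atom) : {a = b} + {a <> b}.
Proof. decide equality; apply Nat.eq_dec. Defined.

Notation cnt := (count_occ atom_eq_dec).

Definition counter_atom (n : nat) (a : atom) : Prop :=
  match a with At_r m => 1 <= m <= n | _ => False end.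

Definition counters (n : nat) (w : list atom) : list nat :=
  map (fun m => cnt w (At_r m)) (seq 1 n).

Lemma counters_perm n u v : Permutation u v -> counters n u = counters n v.
Proof.
  intros P. apply map_ext. intros m. exact (proj1 (Permutation_count_occ _ _ _) P _).
Qed.

Lemma counters_nil n : counters n [] = repeat 0 n.
Proof. unfold counters. generalize 1. induction n; intros s; simpl; f_equal; auto. Qed.

Lemma map_count_cons_r s len m w : s <= m ->
  map (fun k => cnt (At_r m :: w) (At_r k)) (seq s len)
  = upd (map (fun k => cnt w (At_r k)) (seq s len)) (m - s) S.
Proof.
  revert s; induction len as [|len IH]; intros s Hs; cbn [seq map]; [reflexivity|].
  destruct (Nat.eq_dec m s) as [->|Hne].
  - rewrite Nat.sub_diag. cbn [upd]. rewrite count_occ_cons_eq by reflexivity.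
    f_equal. apply map_ext_in. intros k Hk. apply in_seq in Hk.
    apply count_occ_cons_neq. intros E. injection E. lia.
  - replace (m - s) with (S (m - S s)) by lia. cbn [upd].
    rewrite count_occ_cons_neq by congruence. f_equal. apply IH. lia.
Qed.

Lemma counters_cons_r n m w : 1 <= m ->
  counters n (At_r m :: w) = upd (counters n w) (m - 1) S.
Proof. apply map_count_cons_r. Qed.

Lemma ctr_counters n m w : 1 <= m <= n -> ctr (counters n w) m = cnt w (At_r m).
Proof.
  intros Hm. unfold ctr, counters.
  rewrite nth_indep with (d' := cnt w (At_r 0)) by (rewrite length_map, length_seq; lia).
  rewrite map_nth with (f := fun k => cnt w (At_r k)), seq_nth by lia.
  do 3 f_equal. lia.
Qed.

Lemma upd_S_pred cs p : upd (upd cs p S) p pred = cs.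
Proof. revert p; induction cs; destruct p; simpl; f_equal; auto. Qed.

Lemma computes_from_halt n M cs c :
  machine_wf n M -> computes M (0, cs) c -> c = (0, cs).
Proof.
  intros Hwf H. apply clos_rt_rt1n in H.
  inversion H as [|y z Hs _]; [reflexivity|]. exfalso.
  unfold machine_wf in Hwf. rewrite Forall_forall in Hwf.
  inversion Hs; match goal with HI : In _ M |- _ => apply Hwf in HI end;
    simpl in *; lia.
Qed.

Section Acceptance.

Variables (n : nat) (M : list instr).

Definition accepts_from (h : atom) (w : list atom) : Prop :=
  match h with
  | At_l i => computes M (i, counters n w) (0, repeat 0 n)
  | At_kappa m => cnt w (At_r m) = 0
  | At_r _ => False
  end.

Definition accepting (w : list atom) : Prop :=
  exists h w', Permutation w (h :: w') /\ Forall (counter_atom n) w' /\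
    accepts_from h w'.

Lemma accepting_perm u v : Permutation u v -> accepting u -> accepting v.
Proof.
  intros P (h & w' & Hw & Hc & Ha). exists h, w'.
  split; [eapply perm_trans; [apply Permutation_sym, P|exact Hw]|auto].
Qed.

Lemma accepts_from_perm h u v :
  Permutation u v -> accepts_from h u -> accepts_from h v.
Proof.
  intros P. destruct h; simpl; [easy| |].
  - rewrite (counters_perm n u v P). easy.
  - rewrite (proj1 (Permutation_count_occ _ _ _) P). easy.
Qed.

Lemma accepting_cons_iff h w : ~ counter_atom n h ->
  accepting (h :: w) <-> Forall (counter_atom n) w /\ accepts_from h w.
Proof.
  intros Hh. split.
  - intros (h' & w' & P & Hc & Ha).
    destruct (atom_eq_dec h h') as [<-|Hne].
    + apply Permutation_cons_inv, Permutation_sym in P.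
      split; [exact (Permutation_Forall P Hc)|exact (accepts_from_perm _ _ _ P Ha)].
    + exfalso. apply Hh. rewrite Forall_forall in Hc. apply Hc.
      destruct (Permutation_in h P (in_eq h w)); [congruence|assumption].
  - intros [Hc Ha]. exists h, w. auto.
Qed.

Lemma accepting_l_iff i w : accepting (At_l i :: w) <->
  Forall (counter_atom n) w /\ computes M (i, counters n w) (0, repeat 0 n).
Proof. exact (accepting_cons_iff (At_l i) w (fun H => H)). Qed.

Lemma accepting_kappa_iff m w : accepting (At_kappa m :: w) <->
  Forall (counter_atom n) w /\ cnt w (At_r m) = 0.
Proof. exact (accepting_cons_iff (At_kappa m) w (fun H => H)). Qed.

Lemma accepting_inc i m j w : In (I_inc i m j) M ->
  accepting (At_l j :: At_r m :: w) -> accepting (At_l i :: w).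
Proof.
  intros HI Hj. apply accepting_l_iff in Hj as [Hc Hj].
  apply Forall_cons_iff in Hc as [Hm Hc]. apply accepting_l_iff. split; [exact Hc|].
  eapply rt_trans; [apply rt_step, st_inc, HI|].
  rewrite <- counters_cons_r; [exact Hj|]. simpl in Hm; lia.
Qed.

Lemma accepting_dec i m j w : In (I_dec i m j) M -> 1 <= m <= n ->
  accepting (At_l j :: w) -> accepting (At_l i :: At_r m :: w).
Proof.
  intros HI Hm Hj. apply accepting_l_iff in Hj as [Hc Hj].
  apply accepting_l_iff. split; [now constructor|].
  eapply rt_trans; [apply rt_step; eapply st_dec; [exact HI|]|].
  - rewrite ctr_counters, count_occ_cons_eq by (auto || lia). lia.
  - rewrite counters_cons_r, upd_S_pred by lia. exact Hj.
Qed.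

Lemma accepting_jpos i m j w : In (I_jpos i m j) M ->
  accepting (At_l j :: At_r m :: w) -> accepting (At_l i :: At_r m :: w).
Proof.
  intros HI Hj. apply accepting_l_iff in Hj as [Hc Hj].
  apply accepting_l_iff. split; [exact Hc|].
  eapply rt_trans; [apply rt_step; eapply st_jpos; [exact HI|]|exact Hj].
  apply Forall_inv in Hc. simpl in Hc.
  rewrite ctr_counters, count_occ_cons_eq by (auto || lia). lia.
Qed.

Lemma accepting_jzero i m j w : In (I_jzero i m j) M -> 1 <= m <= n ->
  accepting (At_l j :: w) -> accepting (At_kappa m :: w) -> accepting (At_l i :: w).
Proof.
  intros HI Hm Hj Hk. apply accepting_l_iff in Hj as [Hc Hj].
  apply accepting_kappa_iff in Hk as [_ Hk].
  apply accepting_l_iff. split; [exact Hc|].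
  eapply rt_trans; [apply rt_step; eapply st_jzero; [exact HI|]|exact Hj].
  rewrite ctr_counters by lia. exact Hk.
Qed.

Lemma accepting_kappa_halt m w : machine_wf n M -> 1 <= m <= n ->
  accepting (At_l 0 :: w) -> accepting (At_kappa m :: w).
Proof.
  intros Hwf Hm H0. apply accepting_l_iff in H0 as [Hc H0].
  apply (computes_from_halt n) in H0; [|exact Hwf]. injection H0 as H0.
  apply accepting_kappa_iff. split; [exact Hc|].
  rewrite <- (ctr_counters n m w Hm), <- H0. apply nth_repeat.
Qed.

Lemma accepting_kappa_r m i w : 1 <= i <= n -> i <> m ->
  accepting (At_kappa m :: w) -> accepting (At_kappa m :: At_r i :: w).
Proof.
  intros Hi Hne Hk. apply accepting_kappa_iff in Hk as [Hc Hk].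
  apply accepting_kappa_iff. split; [now constructor|].
  rewrite count_occ_cons_neq by congruence. exact Hk.
Qed.

Lemma interp_Phi A : machine_wf n M -> In A (Phi M) -> interp accepting A [].
Proof.
  intros Hwf HA. apply in_map_iff in HA as ([i m j|i m j|i m j|i m j] & <- & HI);
    pose proof (proj1 (Forall_forall _ _) Hwf _ HI) as [_ Hm];
    apply (interp_lolli_nil _ accepting_perm); intros x y Hx Hy.
  - apply (interp_atom_elim _ accepting_perm _ _ _ Hx).
    apply orth_tensor_elim in Hy; [|exact accepting_perm].
    exact (accepting_inc _ _ _ _ HI Hy).
  - apply (interp_tensor_elim _ accepting_perm _ _ _ _ Hx).
    apply orth_atom_iff in Hy; [|exact accepting_perm].
    exact (accepting_dec _ _ _ _ HI Hm Hy).
  - apply (interp_tensor_elim _ accepting_perm _ _ _ _ Hx).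
    apply orth_tensor_elim in Hy; [|exact accepting_perm].
    exact (accepting_jpos _ _ _ _ HI Hy).
  - apply (interp_atom_elim _ accepting_perm _ _ _ Hx).
    apply orth_plus_elim in Hy as [Hj Hk]; [|exact accepting_perm].
    exact (accepting_jzero _ _ _ _ HI Hm Hj Hk).
Qed.

Lemma interp_K A : machine_wf n M -> In A (K n) -> interp accepting A [].
Proof.
  intros Hwf HA. apply in_flat_map in HA as (m & Hm & HA). apply in_seq in Hm.
  destruct HA as [<-|HA].
  - apply (interp_lolli_nil _ accepting_perm). intros x y Hx Hy.
    apply (interp_atom_elim _ accepting_perm _ _ _ Hx).
    apply orth_atom_iff in Hy; [|exact accepting_perm].
    apply accepting_kappa_halt; [exact Hwf|lia|exact Hy].
  - apply in_map_iff in HA as (i & <- & Hi). apply filter_In in Hi as [Hi Hne].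
    apply in_seq in Hi. apply Bool.negb_true_iff, Nat.eqb_neq in Hne.
    apply (interp_lolli_nil _ accepting_perm). intros x y Hx Hy.
    apply (interp_tensor_elim _ accepting_perm _ _ _ _ Hx).
    apply orth_atom_iff in Hy; [|exact accepting_perm].
    apply accepting_kappa_r; [lia|exact Hne|exact Hy].
Qed.

End Acceptance.

Fixpoint counter_word (m : nat) (ks : list nat) : list atom :=
  match ks with
  | [] => []
  | k :: ks' => repeat (At_r m) k ++ counter_word (S m) ks'
  end.

Lemma counter_word_spec m ks :
  flat_map (fun mk => repeat (r (fst mk)) (snd mk)) (combine (seq m (length ks)) ks)
  = map Pos (counter_word m ks).
Proof.
  revert m; induction ks as [|k ks IH]; intros m; simpl; [reflexivity|].
  rewrite map_app, map_repeat, IH. reflexivity.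
Qed.

Lemma count_counter_word_below ks m k : k < m -> cnt (counter_word m ks) (At_r k) = 0.
Proof.
  revert m; induction ks as [|c ks IH]; intros m Hk; simpl; [reflexivity|].
  rewrite count_occ_app, count_occ_repeat_neq, IH by (try (intros E; injection E); lia). reflexivity.
Qed.

Lemma counters_counter_word m ks :
  map (fun k => cnt (counter_word m ks) (At_r k)) (seq m (length ks)) = ks.
Proof.
  revert m; induction ks as [|c ks IH]; intros m; simpl; [reflexivity|]. f_equal.
  - rewrite count_occ_app, count_occ_repeat_eq, count_counter_word_below by (reflexivity || lia). lia.
  - rewrite <- (IH (S m)) at 2. apply map_ext_in. intros k Hk. apply in_seq in Hk.
    rewrite count_occ_app, count_occ_repeat_neq by (intros E; injection E; lia).
    reflexivity.
Qed.

Lemma interp_initial_formula pole ks :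
  (forall u v, Permutation u v -> pole u -> pole v) ->
  interp pole (initial_formula ks) (At_l 1 :: counter_word 1 ks).
Proof.
  intros Hp. unfold initial_formula. rewrite counter_word_spec.
  apply (interp_fold_tensor _ Hp _ _ [At_l 1]), interp_atom_intro, Hp.
Qed.

Theorem theorem3 (n : nat) (M : list instr) (ks : list nat) :
  machine_wf n M ->
  length ks = n ->
  ll_sequent (initial_formula ks :: map OfCourse (Phi M) ++ map OfCourse (K n))
             (l 0 :: nil) ->
  computes M (1, ks) (0, repeat 0 n).
Proof.
  intros Hwf Hlen Hll. rewrite <- map_app in Hll.
  assert (Hacc : accepting n M ((At_l 1 :: counter_word 1 ks) ++ [])).
  { apply (ll_sequent_sound _ (accepting_perm n M) _ _ _ _ _ Hll).
    - apply interp_initial_formula, accepting_perm.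
    - intros A HA. apply in_app_or in HA as [HA|HA];
        [apply interp_Phi|apply interp_K]; assumption.
    - apply orth_atom_iff; [apply accepting_perm|].
      apply accepting_l_iff. rewrite counters_nil. split; [constructor|apply rt_refl]. }
  rewrite app_nil_r in Hacc. apply accepting_l_iff in Hacc as [_ Hc].
  subst n. unfold counters in Hc. rewrite counters_counter_word in Hc. exact Hc.
Qed.
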